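(* Let $G$ be a graph with no induced $P_7$, $C_4$, $C_6$ or $C_7$, let $H=(B_1,\dots,B_5)$ be a nice blowup of $C_5$ in $G$, and let $i\in\{1,\dots,5\}$. If $a-b-c$ is an induced path in $G[A_2(i)]$, then $N_{A'_3(j)}(a)\subseteq N_{A'_3(j)}(b)$ and $N_{A'_3(j)}(c)\subseteq N_{A'_3(j)}(b)$ for each $j\in\{i,i+1\}$.
   Context: Indices modulo $5$. A nice blowup of $C_5$ is a tuple $(B_1,\dots,B_5)$ of pairwise disjoint cliques such that every vertex of $B_j$ has a neighbor in $B_{j-1}$ and in $B_{j+1}$, $B_j$ is anticomplete to $B_{j+2}$, and there are no $a\in B_j$, distinct $b,c\in B_{j+1}$, $d\in B_{j+2}$ with $G[\{a,b,c,d\}]\cong P_4$; $V(H)=\bigcup B_j$. For $v\notin V(H)$, $\operatorname{supp}(v)$ is the set of $j$ such that $v$ has a neighbor in $B_j$. $A_2(i)=\{v\notin V(H):\operatorname{supp}(v)=\{i,i+1\}\}$, $A_3(j)=\{v\notin V(H):\operatorname{supp}(v)=\{j-1,j,j+1\}\}$, $A'_3(j)=A_3(j)\cup B_j$; $N_S(v)$ denotes the neighbors of $v$ in $S$. *)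

From mathcomp Require Import all_boot.
Set Implicit Arguments. Unset Strict Implicit. Unset Printing Implicit Defensive.

Section Graphs.
Variable T : finType.
Variable adj : rel T.

Definition simple_graph := symmetric adj /\ irreflexive adj.

Definition is_induced_path (k : nat) (f : 'I_k -> T) :=
  injective f /\ forall i j : 'I_k, adj (f i) (f j) = ((i.+1 == j) || (j.+1 == i)).

Definition is_induced_cycle (k : nat) (f : 'I_k -> T) :=
  injective f /\ forall i j : 'I_k,
    adj (f i) (f j) = ((i.+1 %% k == j) || (j.+1 %% k == i)).

Definition has_induced_P (k : nat) := exists f : 'I_k -> T, is_induced_path f.
Definition has_induced_C (k : nat) := exists f : 'I_k -> T, is_induced_cycle f.

Definition induces_P4 (S : {set T}) :=
  exists f : 'I_4 -> T, is_induced_path f /\ [set f i | i : 'I_4] = S.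

Definition clique (S : {set T}) :=
  forall u v, u \in S -> v \in S -> u != v -> adj u v.

Definition nx (j : 'I_5) : 'I_5 := ordS j.
Definition pv (j : 'I_5) : 'I_5 := ord_pred j.

Definition nice_blowup_C5 (B : 'I_5 -> {set T}) :=
  [/\ (forall j k, j != k -> [disjoint B j & B k]),
      (forall j, clique (B j)),
      (forall j v, v \in B j ->
          (exists2 u, u \in B (pv j) & adj v u) /\
          (exists2 u, u \in B (nx j) & adj v u)),
      (forall j u v, u \in B j -> v \in B (nx (nx j)) -> ~~ adj u v) &
      (forall j a b c d, a \in B j -> b \in B (nx j) -> c \in B (nx j) ->
          b != c -> d \in B (nx (nx j)) -> ~ induces_P4 [set a; b; c; d])].

Definition VH (B : 'I_5 -> {set T}) : {set T} := \bigcup_(j < 5) B j.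

Definition supp (B : 'I_5 -> {set T}) (v : T) : {set 'I_5} :=
  [set j | [exists u in B j, adj v u]].

Definition A2 (B : 'I_5 -> {set T}) (i : 'I_5) : {set T} :=
  [set v | (v \notin VH B) && (supp B v == [set i; nx i])].

Definition A3 (B : 'I_5 -> {set T}) (j : 'I_5) : {set T} :=
  [set v | (v \notin VH B) && (supp B v == [set pv j; j; nx j])].

Definition A3' (B : 'I_5 -> {set T}) (j : 'I_5) : {set T} := A3 B j :|: B j.

Definition nbhd_in (S : {set T}) (v : T) : {set T} := [set u in S | adj v u].

End Graphs.

(* Suppose x in A'_3(j) sees a but not b.  Walking from x away from {i, i+1}
   through three consecutive blocks of the blowup gives an induced path
   x - p1 - p2 - p3 whose vertices p1, p2, p3 miss a, b, c (the support of
   a, b, c is {i, i+1}) and whose last two vertices miss x (they lie outside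
   the support of x).  Then x - a - b - c - x is an induced C4 if x sees c,
   and p3 - p2 - p1 - x - a - b - c is an induced P7 otherwise. *)

From mathcomp Require Import all_boot zify.
Set Implicit Arguments. Unset Strict Implicit. Unset Printing Implicit Defensive.

Definition path_rel {k} : rel 'I_k := fun i j => (i.+1 == j) || (j.+1 == i).

Lemma path_relC k : symmetric (@path_rel k).
Proof. by move=> i j; rewrite /path_rel orbC. Qed.

(* The hypothesis excludes P3, whose two ends have the same neighbours. *)
Lemma path_rel_inj k (i j : 'I_k) : 3 < k -> path_rel i =1 path_rel j -> i = j.
Proof.
move=> k_gt3 eq_ij; apply/ord_inj/eqP; apply: contraT => ne_ij.
wlog lt_ij : i j eq_ij ne_ij / i < j.
  move=> W; case: (ltngtP i j) => [|gt_ij|eq_ij']; first exact: W.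
    by apply: (W j i) gt_ij => [m|]; rewrite 1?eq_ij // eq_sym.
  by rewrite eq_ij' eqxx in ne_ij.
have agree m (lt_mk : m < k) := eq_ij (Ordinal lt_mk).
rewrite /path_rel /= in agree.
have [i0 | i_gt0] := posnP i; last first.
  have lt_ik : i.-1 < k := leq_ltn_trans (leq_pred i) (ltn_ord i).
  by move: (agree _ lt_ik); lia.
have [j2 | j_ne2] := eqVneq (nat_of_ord j) 2.
  by move: (agree 3 k_gt3); lia.
have lt_1k : 1 < k by lia.
by move: (agree 1 lt_1k); lia.
Qed.

Section InducedSubgraphs.

Variables (T : finType) (adj : rel T).
Hypotheses (adj_sym : symmetric adj) (adj_irr : irreflexive adj).

Lemma adj_neq u v : adj u v -> u != v.
Proof. by apply: contraTneq => ->; rewrite adj_irr. Qed.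

Lemma has_induced_P7 v0 v1 v2 v3 v4 v5 v6 :
  adj v0 v1 -> adj v1 v2 -> adj v2 v3 -> adj v3 v4 -> adj v4 v5 -> adj v5 v6 ->
  ~~ adj v0 v2 -> ~~ adj v0 v3 -> ~~ adj v0 v4 -> ~~ adj v0 v5 -> ~~ adj v0 v6 ->
  ~~ adj v1 v3 -> ~~ adj v1 v4 -> ~~ adj v1 v5 -> ~~ adj v1 v6 ->
  ~~ adj v2 v4 -> ~~ adj v2 v5 -> ~~ adj v2 v6 ->
  ~~ adj v3 v5 -> ~~ adj v3 v6 -> ~~ adj v4 v6 ->
  has_induced_P adj 7.
Proof.
move=> *; pose f (i : 'I_7) := nth v0 [:: v0; v1; v2; v3; v4; v5; v6] i.
have adj_f i j : adj (f i) (f j) = path_rel i j.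
  wlog le_ij : i j / i <= j.
    by move=> W; case: (leqP i j) => [/W //|/ltnW/W]; rewrite adj_sym path_relC.
  move: i j le_ij => [[|[|[|[|[|[|[|//]]]]]]] ?] [[|[|[|[|[|[|[|//]]]]]]] ?] //= _;
    by rewrite ?adj_irr //; apply/negbTE.
exists f; split=> // i j fij; apply: path_rel_inj => // m.
by rewrite -!adj_f fij.
Qed.

Lemma has_induced_C4 w0 w1 w2 w3 :
  adj w0 w1 -> adj w1 w2 -> adj w2 w3 -> adj w3 w0 ->
  ~~ adj w0 w2 -> ~~ adj w1 w3 -> w0 != w2 -> w1 != w3 ->
  has_induced_C adj 4.
Proof.
move=> e01 e12 e23 e30 n02 n13 d02 d13; pose s := [:: w0; w1; w2; w3].
have uniq_s : uniq s.
  have e03 : adj w0 w3 by rewrite adj_sym.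
  by rewrite /= !inE !negb_or d02 d13 !adj_neq.
exists (fun i : 'I_4 => nth w0 s i); split.
  by move=> i j /eqP; rewrite nth_uniq // => /eqP/ord_inj.
move=> i j; wlog le_ij : i j / i <= j.
  by move=> W; case: (leqP i j) => [/W //|/ltnW/W]; rewrite adj_sym orbC.
move: i j le_ij => [[|[|[|[|//]]]] ?] [[|[|[|[|//]]]] ?] //= _;
  rewrite ?modnn ?modn_small ?adj_irr //; by [rewrite adj_sym | apply/negbTE].
Qed.

Lemma adj_center_of_tail a b c x p1 p2 p3 :
  ~ has_induced_P adj 7 -> ~ has_induced_C adj 4 ->
  adj a b -> adj b c -> ~~ adj a c -> a != c ->
  adj x a -> adj x p1 -> adj p1 p2 -> adj p2 p3 ->
  ~~ adj x p2 -> ~~ adj x p3 -> ~~ adj p1 p3 ->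
  {in [:: p1; p2; p3] & [:: a; b; c], forall p y, ~~ adj p y} ->
  adj x b.
Proof.
move=> noP7 noC4 ab bc ac a_c xa xp1 p1p2 p2p3 xp2 xp3 p1p3 tail_far.
have [p1a p1b p1c] : [/\ ~~ adj p1 a, ~~ adj p1 b & ~~ adj p1 c].
  by split; apply: tail_far; rewrite !inE eqxx ?orbT.
have [p2a p2b p2c] : [/\ ~~ adj p2 a, ~~ adj p2 b & ~~ adj p2 c].
  by split; apply: tail_far; rewrite !inE eqxx ?orbT.
have [p3a p3b p3c] : [/\ ~~ adj p3 a, ~~ adj p3 b & ~~ adj p3 c].
  by split; apply: tail_far; rewrite !inE eqxx ?orbT.
apply: contraT => xb; have [cx | xc] := boolP (adj c x).
  have x_b : x != b by apply: contraNneq p1b => <-; rewrite adj_sym.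
  by case: noC4; apply: (@has_induced_C4 x a b c).
by case: noP7; apply: (@has_induced_P7 p3 p2 p1 x a b c); rewrite // adj_sym.
Qed.

End InducedSubgraphs.

Definition step (fwd : bool) : 'I_5 -> 'I_5 := if fwd then nx else pv.

Lemma step_near fwd k : step fwd k \in [set pv k; nx k].
Proof. by case: fwd; rewrite !inE eqxx ?orbT. Qed.

Lemma iter_step_far fwd k n :
  1 < n < 4 -> iter n (step fwd) k \notin [set pv k; k; nx k].
Proof.
case: fwd; case: n => [|[|[|[|//]]]] //= _;
  by case: k => [[|[|[|[|[|//]]]]] ?]; rewrite !inE.
Qed.

Lemma exists_step_away i j :
  j \in [set i; nx i] -> exists fwd, step fwd j \notin [set i; nx i].
Proof.
case/set2P=> ->; [exists false | exists true];
  by case: i => [[|[|[|[|[|//]]]]] ?]; rewrite !inE.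
Qed.

Lemma iter_step_away i j fwd n :
  j \in [set i; nx i] -> step fwd j \notin [set i; nx i] -> 0 < n < 4 ->
  iter n (step fwd) j \notin [set i; nx i].
Proof.
case/set2P=> ->; case: fwd; case: n => [|[|[|[|//]]]] //= _;
  by case: i => [[|[|[|[|[|//]]]]] ?]; rewrite !inE.
Qed.

Lemma far_index_nx2 k k' :
  k' \notin [set pv k; k; nx k] -> (k' == nx (nx k)) || (k == nx (nx k')).
Proof. by case: k k' => [[|[|[|[|[|//]]]]] ?] [[|[|[|[|[|//]]]]] ?]; rewrite !inE. Qed.

Section NiceBlowup.

Variables (T : finType) (adj : rel T) (B : 'I_5 -> {set T}).
Hypotheses (adj_sym : symmetric adj) (adj_irr : irreflexive adj).
Hypothesis nice : nice_blowup_C5 adj B.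

Lemma suppP y k : reflect (exists2 u, u \in B k & adj y u) (k \in supp adj B y).
Proof.
rewrite inE; apply: (iffP existsP) => [[u /andP[Bu yu]] | [u Bu yu]].
  by exists u.
by exists u; rewrite Bu.
Qed.

Lemma supp_nonadj y k u : k \notin supp adj B y -> u \in B k -> ~~ adj y u.
Proof. by move=> k_out Bu; apply: contra k_out => yu; apply/suppP; exists u. Qed.

Lemma blowup_nbr k k' v :
  k' \in [set pv k; nx k] -> v \in B k -> exists2 u, u \in B k' & adj v u.
Proof. by case: nice => _ _ nbr _ _; case/set2P=> -> /nbr[]. Qed.

Lemma blowup_nonadj k k' u v :
  k' \notin [set pv k; k; nx k] -> u \in B k -> v \in B k' -> ~~ adj u v.
Proof.
case: nice => _ _ _ far _; case/far_index_nx2/orP=> /eqP-> Bu Bv.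
  exact: far Bu Bv.
by rewrite adj_sym; exact: far Bv Bu.
Qed.

Lemma A2_nonadj i k y u :
  k \notin [set i; nx i] -> y \in A2 adj B i -> u \in B k -> ~~ adj y u.
Proof.
by move=> k_out; rewrite inE => /andP[_ /eqP supp_y]; apply: supp_nonadj; rewrite supp_y.
Qed.

Lemma A3'_nbr j k x :
  k \in [set pv j; nx j] -> x \in A3' adj B j -> exists2 u, u \in B k & adj x u.
Proof.
move=> k_near; rewrite inE => /orP[|xB]; last exact: blowup_nbr k_near xB.
rewrite inE => /andP[_ /eqP supp_x]; apply/suppP; rewrite supp_x.
by case/set2P: k_near => ->; rewrite !inE eqxx ?orbT.
Qed.

Lemma A3'_nonadj j k x u :
  k \notin [set pv j; j; nx j] -> x \in A3' adj B j -> u \in B k -> ~~ adj x u.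
Proof.
move=> k_far; rewrite inE => /orP[|xB]; last exact: blowup_nonadj k_far xB.
by rewrite inE => /andP[_ /eqP supp_x]; apply: supp_nonadj; rewrite supp_x.
Qed.

Lemma nbhd_A3'_subset i j fwd a b c :
  ~ has_induced_P adj 7 -> ~ has_induced_C adj 4 ->
  adj a b -> adj b c -> ~~ adj a c -> a != c ->
  a \in A2 adj B i -> b \in A2 adj B i -> c \in A2 adj B i ->
  j \in [set i; nx i] -> step fwd j \notin [set i; nx i] ->
  nbhd_in adj (A3' adj B j) a \subset nbhd_in adj (A3' adj B j) b.
Proof.
move=> noP7 noC4 ab bc ac a_c aA bA cA j_in away.
apply/subsetP => x; rewrite inE => /andP[xA ax]; rewrite inE xA adj_sym.
have [p1 p1B xp1] := A3'_nbr (step_near fwd j) xA.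
have [p2 p2B p1p2] := blowup_nbr (step_near fwd _) p1B.
have [p3 p3B p2p3] := blowup_nbr (step_near fwd _) p2B.
apply: (adj_center_of_tail adj_sym adj_irr noP7 noC4 ab bc ac a_c _ xp1 p1p2 p2p3).
- by rewrite adj_sym.
- exact: A3'_nonadj (iter_step_far fwd j (isT : 1 < 2 < 4)) xA p2B.
- exact: A3'_nonadj (iter_step_far fwd j (isT : 1 < 3 < 4)) xA p3B.
- exact: blowup_nonadj (iter_step_far fwd _ (isT : 1 < 2 < 4)) p1B p3B.
move=> p y p_tail y_abc; rewrite adj_sym.
have yA : y \in A2 adj B i by rewrite !inE in y_abc; case/or3P: y_abc => /eqP->.
have tail_out n : 0 < n < 4 -> iter n (step fwd) j \notin [set i; nx i].
  exact: iter_step_away.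
move: p_tail; rewrite !inE => /or3P[]/eqP->.
- exact: A2_nonadj (tail_out 1 isT) yA p1B.
- exact: A2_nonadj (tail_out 2 isT) yA p2B.
- exact: A2_nonadj (tail_out 3 isT) yA p3B.
Qed.

End NiceBlowup.

Theorem lemma7p3 (T : finType) (adj : rel T) (B : 'I_5 -> {set T}) (i : 'I_5)
    (a b c : T) :
  simple_graph adj ->
  ~ has_induced_P adj 7 -> ~ has_induced_C adj 4 ->
  ~ has_induced_C adj 6 -> ~ has_induced_C adj 7 ->
  nice_blowup_C5 adj B ->
  a \in A2 adj B i -> b \in A2 adj B i -> c \in A2 adj B i ->
  adj a b -> adj b c -> ~~ adj a c -> a != c ->
  forall j, j \in [set i; nx i] ->
    nbhd_in adj (A3' adj B j) a \subset nbhd_in adj (A3' adj B j) b /\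
    nbhd_in adj (A3' adj B j) c \subset nbhd_in adj (A3' adj B j) b.
Proof.
move=> [adj_sym adj_irr] noP7 noC4 _ _ nice aA bA cA ab bc ac a_c j j_in.
have [fwd away] := exists_step_away j_in.
have subset_mid := nbhd_A3'_subset adj_sym adj_irr nice noP7 noC4.
split; first exact: subset_mid ab bc ac a_c aA bA cA j_in away.
by apply: subset_mid cA bA aA j_in away; rewrite 1?adj_sym // eq_sym.
Qed.
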